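(* For every non-initial valid composite state $\sigma \in S_V^\ast = S_V \setminus S_0$ of the composition $\mathcal{M}uddy\mathcal{P}uzzle$, the predicate $\mathbf{consistent}(\sigma)$ holds.
   Context: Fix $n \ge 1$ children indexed $1,\dots,n$. A message is a triple $\langle j, r, s\rangle$ with $j \in \{1,\dots,n\}$ (the sender), $r \in \mathbb{N}$ (a round number) and $s \in \{u,m,c\}$ (epistemic status: $u$ = ''does not know own status'', $m$ = ''knows they are muddy'', $c$ = ''knows they are clean''); $\bot$ denotes ''no message''. Child $i$ is a VLSM $\mathcal{C}_i$ with labels $\{\mathit{init},\mathit{emit},\mathit{receive}\}$, no initial messages, initial states $\langle \mathit{Obs}\rangle$ with $\mathit{Obs}\subseteq\{1,\dots,n\}$, and running states $\langle \mathit{Obs}, r, s\rangle$ with $\mathit{Obs}\subseteq\{1,\dots,n\}$, $r\in\mathbb{N}$, $s\in\{u,m,c\}$; $\mathit{Obs}(\cdot)$ denotes the observation set of either kind of state. Transitions $\tau_i$ and local validity $\beta_i$: - init: enabled only on an initial state $\langle\mathit{Obs}\rangle$ with input $\bot$; goes to $\langle \mathit{Obs},0,u\rangle$ if $\mathit{Obs}\ne\emptyset$ and to $\langle\mathit{Obs},0,m\rangle$ if $\mathit{Obs}=\emptyset$; output $\bot$. - emit: enabled only on a running state $\langle\mathit{Obs},r,s\rangle$ with input $\bot$; state unchanged, output $\langle i,r,s\rangle$. - receive: on a running state $\langle\mathit{Obs},r,s\rangle$ with input message $\langle j,r',s'\rangle$, output $\bot$, new state given by the first applicable case: (R1) $s\in\{m,c\}$: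 unchanged. Otherwise $s=u$ and: (R2) $s'=c$, $j\notin\mathit{Obs}$, $r'=|\mathit{Obs}|$: $\langle\mathit{Obs},r',c\rangle$; (R3) $s'=c$, $j\notin\mathit{Obs}$, $r'=|\mathit{Obs}|+1$: $\langle\mathit{Obs},r'-1,m\rangle$; (R4) $s'=m$, $j\in\mathit{Obs}$, $r'=|\mathit{Obs}|$: $\langle\mathit{Obs},r',m\rangle$; (R5) $s'=m$, $j\in\mathit{Obs}$, $r'=|\mathit{Obs}|-1$: $\langle\mathit{Obs},r'+1,c\rangle$; (R6) $s'=u$, $j\in\mathit{Obs}$, $r'<r$: unchanged; (R7) $s'=u$, $j\in\mathit{Obs}$, $r\le r'<|\mathit{Obs}|-1$: $\langle\mathit{Obs},r'+1,u\rangle$; (R8) $s'=u$, $j\in\mathit{Obs}$, $r'=|\mathit{Obs}|-1$: $\langle\mathit{Obs},r'+1,m\rangle$; (R9) $s'=u$, $j\notin\mathit{Obs}$, $r'\le r$: unchanged; (R10) $s'=u$, $j\notin\mathit{Obs}$, $r<r'<|\mathit{Obs}|$: $\langle\mathit{Obs},r',u\rangle$; (R11) $s'=u$, $j\notin\mathit{Obs}$, $r'=|\mathit{Obs}|$: $\langle\mathit{Obs},r',m\rangle$. $\beta_i$ for receive holds exactly when one of (R1)–(R11) applies. Composition $\mathcal{M}uddy\mathcal{P}uzzle=(\mathcal{C}_1+\dots+\mathcal{C}_n)|_\varphi$: composite states are tuples $\sigma=(\sigma_1,\dots,\sigma_n)$; composite initial states ($S_0$) are those with every component initial; labels are pairs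 $(i,l)$; transition $(i,l)$ with input $\mu$ applies $\tau_i(l,\sigma_i,\mu)$ to component $i$, leaves the others unchanged, and is allowed iff $\beta_i(l,\sigma_i,\mu)\wedge\varphi((i,l),\sigma,\mu)$. For a composite state $\sigma$ let $M=\bigcup_{i}\mathit{Obs}(\sigma_i)$; $\mathbf{consistent}(\sigma)$ means $M\ne\emptyset$ and $\mathit{Obs}(\sigma_i)=M\setminus\{i\}$ for all $i$. The composition constraint: $\varphi((i,\mathit{init}),\sigma,\mu)=\mathbf{consistent}(\sigma)$; $\varphi((i,\mathit{emit}),\sigma,\mu)=\text{true}$; $\varphi((i,\mathit{receive}),\sigma,\langle j,r',s'\rangle)$ holds iff $\sigma_j$ is a running state $\langle \mathit{Obs}_j,r_j,s_j\rangle$ and $(s'=s_j\wedge r'=r_j)\vee(s'=u\wedge r'<r_j)$. Validity (VLSM sense): a transition is constrained if its input satisfies the constraint. Valid traces and valid messages are defined by simultaneous induction: a valid trace is a finite sequence of constrained transitions starting in a composite initial state in which every input message is either $\bot$ or a valid message; a valid message is one output by some transition of some valid trace. A valid state is one reachable by a valid trace; $S_V$ is the set of valid states and $S_V^\ast=S_V\setminus S_0$. *)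

(* Children are indexed by 'I_n (0-based, i.e. child k+1 of the paper is (k : 'I_n)). *)
From mathcomp Require Import all_boot.
Set Implicit Arguments. Unset Strict Implicit. Unset Printing Implicit Defensive.

(* epistemic status: u = unknown, m = knows muddy, c = knows clean *)
Inductive status := St_u | St_m | St_c.

Section Muddy.
Variable n : nat.

Record msg := Msg { m_sender : 'I_n; m_round : nat; m_status : status }.

Inductive cstate :=
| CInit of {set 'I_n}
| CRun of {set 'I_n} & nat & status.

Definition Obs (s : cstate) : {set 'I_n} :=
  match s with CInit Ob => Ob | CRun Ob _ _ => Ob end.

Inductive label := L_init | L_emit | L_receive.

(* tau_i restricted to beta_i: None when the transition is not locally valid;
   otherwise Some (new state, output). The input None stands for bottom. *)
Definition receive_step (Ob : {set 'I_n}) (r : nat) (s : status)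
    (j : 'I_n) (r' : nat) (s' : status) : option cstate :=
  match s with
  | St_m | St_c => Some (CRun Ob r s)
  | St_u =>
    match s' with
    | St_c =>
        if (j \notin Ob) && (r' == #|Ob|) then Some (CRun Ob r' St_c)
        else if (j \notin Ob) && (r' == #|Ob|.+1) then Some (CRun Ob r'.-1 St_m)
        else None
    | St_m =>
        if (j \in Ob) && (r' == #|Ob|) then Some (CRun Ob r' St_m)
        else if (j \in Ob) && (r'.+1 == #|Ob|) then Some (CRun Ob r'.+1 St_c)
        else None
    | St_u =>
        if j \in Ob then
          if r' < r then Some (CRun Ob r St_u)
          else if (r <= r') && (r'.+1 < #|Ob|) then Some (CRun Ob r'.+1 St_u)
          else if r'.+1 == #|Ob| then Some (CRun Ob r'.+1 St_m)
          else None
        else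
          if r' <= r then Some (CRun Ob r St_u)
          else if (r < r') && (r' < #|Ob|) then Some (CRun Ob r' St_u)
          else if r' == #|Ob| then Some (CRun Ob r' St_m)
          else None
    end
  end.

Definition child_step (i : 'I_n) (l : label) (st : cstate) (inp : option msg)
    : option (cstate * option msg) :=
  match l, st, inp with
  | L_init, CInit Ob, None =>
      Some (if Ob == set0 then CRun Ob 0 St_m else CRun Ob 0 St_u, None)
  | L_emit, CRun Ob r s, None => Some (CRun Ob r s, Some (Msg i r s))
  | L_receive, CRun Ob r s, Some (Msg j r' s') =>
      match receive_step Ob r s j r' s' with
      | Some st' => Some (st', None)
      | None => None
      end
  | _, _, _ => None
  end.

Definition comp_state := 'I_n -> cstate.

Definition comp_initial (sigma : comp_state) : Prop :=
  forall i, exists Ob, sigma i = CInit Ob.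

Definition M_of (sigma : comp_state) : {set 'I_n} := \bigcup_(i : 'I_n) Obs (sigma i).

Definition consistent (sigma : comp_state) : Prop :=
  M_of sigma != set0 /\ forall i : 'I_n, Obs (sigma i) = M_of sigma :\ i.

Definition phi (i : 'I_n) (l : label) (sigma : comp_state) (inp : option msg) : Prop :=
  match l with
  | L_init => consistent sigma
  | L_emit => True
  | L_receive =>
      match inp with
      | None => False   (* receive with bottom is never locally valid anyway *)
      | Some (Msg j r' s') =>
          match sigma j with
          | CRun _ rj sj => (s' = sj /\ r' = rj) \/ (s' = St_u /\ r' < rj)
          | CInit _ => False
          end
      end
  end.

Definition update (sigma : comp_state) (i : 'I_n) (st : cstate) : comp_state :=
  fun k => if k == i then st else sigma k.

Definition comp_trans (i : 'I_n) (l : label) (sigma : comp_state) (inp : option msg)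
    (sigma' : comp_state) (out : option msg) : Prop :=
  phi i l sigma inp /\
  exists st', child_step i l (sigma i) inp = Some (st', out) /\ sigma' = update sigma i st'.

(* Valid states (reachable by valid traces) and valid messages, by simultaneous induction.
   There are no initial messages. *)
Inductive valid_state : comp_state -> Prop :=
| vs_init : forall sigma, comp_initial sigma -> valid_state sigma
| vs_step : forall sigma i l inp sigma' out,
    valid_state sigma -> valid_input inp ->
    comp_trans i l sigma inp sigma' out -> valid_state sigma'
with valid_input : option msg -> Prop :=
| vi_none : valid_input None
| vi_msg : forall sigma i l inp sigma' m,
    valid_state sigma -> valid_input inp ->
    comp_trans i l sigma inp sigma' (Some m) -> valid_input (Some m).

Definition valid_message (m : msg) : Prop := valid_input (Some m).

End Muddy.

From mathcomp Require Import all_boot.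
Set Implicit Arguments. Unset Strict Implicit. Unset Printing Implicit Defensive.

(* The key observation is that
   no transition of a child ever changes its observation set [Obs], and
   [consistent] only depends on the observation sets of the components; hence
   every constrained composite transition maps consistent states to consistent
   states.  Moreover, from a composite initial state the only enabled
   transitions are [init] transitions, whose composition constraint is exactly
   [consistent].  By induction on valid traces, every valid state is therefore
   either initial or consistent, which is the theorem. *)

Lemma receive_step_Obs n (Ob : {set 'I_n}) r s j r' s' st :
  receive_step Ob r s j r' s' = Some st -> Obs st = Ob.
Proof.
rewrite /receive_step.
by case: s; case: s'; repeat case: ifP => _; move=> // [<-].
Qed.

Lemma child_step_Obs n (i : 'I_n) l st inp st' out :
  child_step i l st inp = Some (st', out) -> Obs st' = Obs st.
Proof.
case: l; case: st => [Ob|Ob r s]; case: inp => [[j r' s']|] //=.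
- by case: eqP => _ [<-].
- by move=> [<-].
- by case E: receive_step => [x|] // [<- _]; exact: receive_step_Obs E.
Qed.

Lemma consistent_same_Obs n (sigma sigma' : comp_state n) :
  (forall k, Obs (sigma' k) = Obs (sigma k)) ->
  consistent sigma -> consistent sigma'.
Proof.
move=> sameObs [M_nonempty ObsE].
have ME : M_of sigma' = M_of sigma.
  by apply: eq_bigr => k _; rewrite sameObs.
by split=> [|k]; rewrite ME // sameObs.
Qed.

Lemma comp_trans_Obs n (i : 'I_n) l sigma inp sigma' out :
  comp_trans i l sigma inp sigma' out -> forall k, Obs (sigma' k) = Obs (sigma k).
Proof.
move=> [_ [st' [step ->]]] k; rewrite /update.
by case: eqP => [->|//]; exact: child_step_Obs step.
Qed.

(* From an initial state only [init] is enabled, and its constraint is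
   [consistent]; so the source state of such a transition is consistent. *)
Lemma comp_trans_from_initial n (i : 'I_n) l sigma inp sigma' out :
  comp_initial sigma -> comp_trans i l sigma inp sigma' out -> consistent sigma.
Proof.
move=> init [constr [st' [step _]]]; have [Ob sigma_i] := init i.
by move: step constr; rewrite sigma_i; case: l => //=; case: inp => [[]|].
Qed.

Lemma valid_state_initial_or_consistent n (sigma : comp_state n) :
  valid_state sigma -> comp_initial sigma \/ consistent sigma.
Proof.
elim=> [s init | s i l inp s' out _ IH _ trans]; first by left.
right; apply: (consistent_same_Obs (comp_trans_Obs trans)).
by case: IH => // init; exact: comp_trans_from_initial init trans.
Qed.

Theorem mainTheorem1 (n : nat) (hn : 1 <= n) (sigma : comp_state n) :
  valid_state sigma -> ~ comp_initial sigma -> consistent sigma.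
Proof.
by move=> /valid_state_initial_or_consistent [].
Qed.
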